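(* Let $\eta$ be a homogeneous integrable 2-form of degree two on $\mathbb{C}^4$ such that, with $\nu=dz_1\wedge\cdots\wedge dz_4$ and $X$ defined by $d\eta=i_X\nu$, one has $X\not\equiv0$ and $\eta=i_Yi_X\nu$ for some linear vector field $Y$. Let $R=\sum_j z_j\,\partial/\partial z_j$ and $\omega=i_R\eta$. Then for every $s\in\mathbb{C}$ the 2-form $\eta_s=\eta+s\,d\omega$ is integrable; more precisely $\eta_s\wedge\eta_s=0$, $d\eta_s=i_X\nu$ and $i_X\eta_s=0$.
   Context: A form is homogeneous of degree $m$ if its coefficients are homogeneous polynomials of degree $m$. A holomorphic $q$-form $\eta$ is integrable if every point $p$ outside its zero set has a neighborhood $V$ with holomorphic 1-forms $\omega_1,\dots,\omega_q$ on $V$ such that $\eta|_V=\omega_1\wedge\cdots\wedge\omega_q$ and $d\omega_j\wedge\eta=0$ for all $j$. *)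

(* Holomorphic differential forms on C^4, with C an arbitrary
   numClosedFieldType (an abstraction of the complex numbers). *)
From HB Require Import structures.
From mathcomp Require Import all_boot all_order all_algebra.
Set Implicit Arguments. Unset Strict Implicit. Unset Printing Implicit Defensive.
Import Order.TTheory GRing.Theory Num.Theory.
Local Open Scope ring_scope.

Section Forms.
Variable C : numClosedFieldType.

Definition pt := 'I_4 -> C.
Definition fn := pt -> C.
(* k-forms as alternating k-linear maps evaluated on the standard basis:
   eta i j z = eta_z(e_i, e_j), i.e. eta = sum_{i<j} eta i j dz_i /\ dz_j *)
Definition form1 := 'I_4 -> fn.
Definition form2 := 'I_4 -> 'I_4 -> fn.
Definition form3 := 'I_4 -> 'I_4 -> 'I_4 -> fn.
Definition form4 := 'I_4 -> 'I_4 -> 'I_4 -> 'I_4 -> fn.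
Definition vfield := 'I_4 -> fn.

Definition alternating2 (eta : form2) := forall i j z, eta i j z = - eta j i z.

Definition shift (z : pt) (k : 'I_4) (h : C) : pt :=
  fun m => z m + (if m == k then h else 0).

Definition has_partial (f : fn) (k : 'I_4) (z : pt) (l : C) :=
  forall e : C, 0 < e -> exists2 d : C, 0 < d &
    forall h : C, 0 < `|h| < d -> `|(f (shift z k h) - f z) / h - l| < e.

Definition is_d1_on (V : pt -> Prop) (om : form1) (theta : form2) :=
  exists D : 'I_4 -> 'I_4 -> fn,
    (forall a b z, V z -> has_partial (om b) a z (D a b z)) /\
    (forall a b z, V z -> theta a b z = D a b z - D b a z).

Definition is_d2_on (V : pt -> Prop) (eta : form2) (theta : form3) :=
  exists D : 'I_4 -> 'I_4 -> 'I_4 -> fn,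
    (forall a b c z, V z -> has_partial (eta b c) a z (D a b c z)) /\
    (forall a b c z, V z -> theta a b c z = D a b c z + D b c a z + D c a b z).

Definition everywhere : pt -> Prop := fun _ => True.
Definition is_d1 := is_d1_on everywhere.
Definition is_d2 := is_d2_on everywhere.

Definition wedge11 (a b : form1) : form2 :=
  fun i j z => a i z * b j z - a j z * b i z.

Definition wedge22 (al be : form2) : form4 :=
  fun i j k l z =>
    al i j z * be k l z - al i k z * be j l z + al i l z * be j k z
  + al j k z * be i l z - al j l z * be i k z + al k l z * be i j z.

(* nu = dz_1 /\ dz_2 /\ dz_3 /\ dz_4 : nu(e_i,e_j,e_k,e_l) = det[e_i;e_j;e_k;e_l] *)
Definition nu : form4 := fun i j k l _ =>
  \det (\matrix_(a < 4, b < 4) ((tnth [tuple i; j; k; l] a == b)%:R : C)).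

Definition ctr3 (X : vfield) (th : form4) : form3 :=
  fun j k l z => \sum_i X i z * th i j k l z.
Definition ctr2 (X : vfield) (th : form3) : form2 :=
  fun k l z => \sum_j X j z * th j k l z.
Definition ctr1 (X : vfield) (th : form2) : form1 :=
  fun l z => \sum_k X k z * th k l z.

Definition radial : vfield := fun k z => z k.

Definition hom2 (f : fn) :=
  exists a : 'I_4 -> 'I_4 -> C, forall z, f z = \sum_i \sum_j a i j * z i * z j.
Definition hom1 (f : fn) :=
  exists b : 'I_4 -> C, forall z, f z = \sum_i b i * z i.

Definition homogeneous_deg2_form2 (eta : form2) :=
  alternating2 eta /\ forall i j, hom2 (eta i j).
Definition linear_vfield (Y : vfield) := forall k, hom1 (Y k).

Definition openset (V : pt -> Prop) :=
  forall z, V z -> exists2 r : C, 0 < r & forall w, (forall k, `|w k - z k| < r) -> V w.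

Definition holomorphic_on (V : pt -> Prop) (f : fn) :=
  forall z, V z -> exists a : 'I_4 -> C, forall e : C, 0 < e ->
    exists2 d : C, 0 < d & forall h : pt, (forall k, `|h k| < d) ->
      `|f (fun m => z m + h m) - f z - \sum_k a k * h k| <= e * \sum_k `|h k|.

Definition integrable2 (eta : form2) :=
  forall p : pt, ~ (forall i j, eta i j p = 0) ->
    exists V : pt -> Prop, [/\ openset V, V p &
      exists om1 om2 : form1,
        [/\ forall i, holomorphic_on V (om1 i),
            forall i, holomorphic_on V (om2 i),
            forall i j z, V z -> eta i j z = wedge11 om1 om2 i j z &
            forall om, om = om1 \/ om = om2 ->
              exists theta, is_d1_on V om theta /\
                forall i j k l z, V z -> wedge22 theta eta i j k l z = 0]].

End Forms.

From mathcomp Require Import all_boot all_order all_algebra.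
From mathcomp Require Import perm ring.
Import Order.TTheory GRing.Theory Num.Theory.
Set Implicit Arguments. Unset Strict Implicit. Unset Printing Implicit Defensive.
Local Open Scope ring_scope.

(* At every point [eta = i_Y i_X nu] is the Hodge dual of [X /\ Y].  As the
   coefficients of [eta] are quadratic, Cartan's formula gives
   [d (i_R eta) = L_R eta - i_R d eta = 4 eta - i_R i_X nu], so
   [eta_s = i_Y' i_X nu] with [Y' = (1 + 4 s) Y - s R].  Hence [eta_s] is again
   decomposable, so [eta_s /\ eta_s = 0] and [i_X eta_s = 0], and
   [d eta_s = d eta] since [d d = 0].  A polynomial 2-form [eta' = i_Y' i_X nu]
   with [d eta' = i_X nu] is integrable: where [eta'(e_a, e_b) <> 0] the Plucker
   relations factor it as [(i_(e_a) eta' / eta'(e_a, e_b)) /\ i_(e_b) eta'], and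
   [d (i_(e_a) eta') /\ eta' = 0] follows by differentiating [eta' /\ eta' = 0]
   and using [d eta' = i_X nu].  Derivatives of the polynomial coefficients are
   computed symbolically on polynomial expressions. *)

Notation o0 := (@Ordinal 4 0 isT).
Notation o1 := (@Ordinal 4 1 isT).
Notation o2 := (@Ordinal 4 2 isT).
Notation o3 := (@Ordinal 4 3 isT).

Lemma ord4P (i : 'I_4) : i = o0 \/ i = o1 \/ i = o2 \/ i = o3.
Proof.
case: i => [[|[|[|[|i]]]] Hi] //.
- by left; apply: val_inj.
- by right; left; apply: val_inj.
- by right; right; left; apply: val_inj.
- by right; right; right; apply: val_inj.
Qed.

Ltac case4 i := case: (ord4P i) => [->|[->|[->|->]]].

Lemma big_ord4 (V : nmodType) (F : 'I_4 -> V) :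
  \sum_i F i = F o0 + F o1 + F o2 + F o3.
Proof.
rewrite !big_ord_recl big_ord0 addr0 !addrA.
by congr (_ + _ + _ + _); congr F; apply: val_inj.
Qed.

Lemma det_xrow (R : comNzRingType) n (A : 'M[R]_n) (a b : 'I_n) :
  a != b -> \det (xrow a b A) = - \det A.
Proof.
by move=> ab; rewrite xrowE det_mulmx det_perm odd_tperm ab expr1 mulN1r.
Qed.

Definition inversions4 (i j k l : nat) : nat :=
  ((j < i)%N + (k < i)%N + (l < i)%N + (k < j)%N + (l < j)%N + (l < k)%N)%N.

Definition sign4 (i j k l : 'I_4) : int :=
  if uniq [:: i; j; k; l] then (-1) ^+ inversions4 i j k l else 0.

Section VolumeForm.
Variable C : numClosedFieldType.

Definition nu_mx (i j k l : 'I_4) : 'M[C]_4 :=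
  \matrix_(a < 4, b < 4) ((tnth [tuple i; j; k; l] a == b)%:R : C).

Lemma nu_mx_swap01 i j k l : nu_mx j i k l = xrow o0 o1 (nu_mx i j k l).
Proof. by apply/matrixP=> a b; rewrite !mxE; case4 a; rewrite ?tpermL ?tpermR ?tpermD. Qed.

Lemma nu_mx_swap12 i j k l : nu_mx i k j l = xrow o1 o2 (nu_mx i j k l).
Proof. by apply/matrixP=> a b; rewrite !mxE; case4 a; rewrite ?tpermL ?tpermR ?tpermD. Qed.

Lemma nu_mx_swap23 i j k l : nu_mx i j l k = xrow o2 o3 (nu_mx i j k l).
Proof. by apply/matrixP=> a b; rewrite !mxE; case4 a; rewrite ?tpermL ?tpermR ?tpermD. Qed.

Lemma det_nu_mx_swap01 i j k l : \det (nu_mx i j k l) = - \det (nu_mx j i k l).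
Proof. by rewrite nu_mx_swap01 det_xrow ?opprK. Qed.

Lemma det_nu_mx_swap12 i j k l : \det (nu_mx i j k l) = - \det (nu_mx i k j l).
Proof. by rewrite nu_mx_swap12 det_xrow ?opprK. Qed.

Lemma det_nu_mx_swap23 i j k l : \det (nu_mx i j k l) = - \det (nu_mx i j l k).
Proof. by rewrite nu_mx_swap23 det_xrow ?opprK. Qed.

Lemma det_nu_mx0123 : \det (nu_mx o0 o1 o2 o3) = 1.
Proof.
rewrite -[RHS](det1 C 4); congr (\det _); apply/matrixP=> a b; rewrite !mxE.
by case4 a.
Qed.

(* Bubble sort of the indices, each adjacent transposition flipping the sign. *)
Ltac det_nu_sort :=
  match goal with
  | |- \det (nu_mx ?a ?b ?c ?d) = _ =>
    first [ have _ : (nat_of_ord b < nat_of_ord a)%N by [];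
            rewrite (det_nu_mx_swap01 a b c d); apply: canLR (@opprK _) _; det_nu_sort
          | have _ : (nat_of_ord c < nat_of_ord b)%N by [];
            rewrite (det_nu_mx_swap12 a b c d); apply: canLR (@opprK _) _; det_nu_sort
          | have _ : (nat_of_ord d < nat_of_ord c)%N by [];
            rewrite (det_nu_mx_swap23 a b c d); apply: canLR (@opprK _) _; det_nu_sort
          | rewrite det_nu_mx0123 ]
  end.

Ltac det_nu_repeated :=
  first [ by apply: (@determinant_alternate _ _ _ o0 o1) => //= b; rewrite !mxE
        | by apply: (@determinant_alternate _ _ _ o0 o2) => //= b; rewrite !mxE
        | by apply: (@determinant_alternate _ _ _ o0 o3) => //= b; rewrite !mxE
        | by apply: (@determinant_alternate _ _ _ o1 o2) => //= b; rewrite !mxE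
        | by apply: (@determinant_alternate _ _ _ o1 o3) => //= b; rewrite !mxE
        | by apply: (@determinant_alternate _ _ _ o2 o3) => //= b; rewrite !mxE ].

Lemma nuE i j k l z : nu i j k l z = (sign4 i j k l)%:~R :> C.
Proof.
rewrite /nu -/(nu_mx i j k l).
case4 i; case4 j; case4 k; case4 l; rewrite /sign4 /inversions4 /=;
first [ det_nu_repeated | det_nu_sort; rewrite ?opprK /= ?expr0z // ].
Qed.

End VolumeForm.

Section PointwiseAlgebra.
Variable C : numClosedFieldType.
Implicit Types (x y u g : 'I_4 -> C) (al be : 'I_4 -> 'I_4 -> C).

Definition ctr_nu x j k l : C := \sum_i x i * (sign4 i j k l)%:~R.
Definition ctr_nu2 x y k l : C := \sum_j y j * ctr_nu x j k l.

Definition wedge22c al be i j k l : C :=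
    al i j * be k l - al i k * be j l + al i l * be j k
  + al j k * be i l - al j l * be i k + al k l * be i j.

Definition ctr_nu_tab x (j k l : 'I_4) : C :=
  match nat_of_ord j, nat_of_ord k, nat_of_ord l with
  | 0, 1, 2 => - x o3 | 0, 1, 3 => x o2 | 0, 2, 1 => x o3
  | 0, 2, 3 => - x o1 | 0, 3, 1 => - x o2 | 0, 3, 2 => x o1
  | 1, 0, 2 => x o3 | 1, 0, 3 => - x o2 | 1, 2, 0 => - x o3
  | 1, 2, 3 => x o0 | 1, 3, 0 => x o2 | 1, 3, 2 => - x o0
  | 2, 0, 1 => - x o3 | 2, 0, 3 => x o1 | 2, 1, 0 => x o3
  | 2, 1, 3 => - x o0 | 2, 3, 0 => - x o1 | 2, 3, 1 => x o0
  | 3, 0, 1 => x o2 | 3, 0, 2 => - x o1 | 3, 1, 0 => - x o2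
  | 3, 1, 2 => x o0 | 3, 2, 0 => x o1 | 3, 2, 1 => - x o0
  | _, _, _ => 0
  end.

(* [ctr_nu2 x y] is the Hodge dual of [x /\ y]: its entries are 2x2 minors. *)
Definition ctr_nu2_tab x y (k l : 'I_4) : C :=
  let m a b := x a * y b - x b * y a in
  match nat_of_ord k, nat_of_ord l with
  | 0, 1 => m o2 o3 | 0, 2 => - m o1 o3 | 0, 3 => m o1 o2
  | 1, 0 => - m o2 o3 | 1, 2 => m o0 o3 | 1, 3 => - m o0 o2
  | 2, 0 => m o1 o3 | 2, 1 => - m o0 o3 | 2, 3 => m o0 o1
  | 3, 0 => - m o1 o2 | 3, 1 => m o0 o2 | 3, 2 => - m o0 o1
  | _, _ => 0
  end.

Lemma ctr_nuE x j k l : ctr_nu x j k l = ctr_nu_tab x j k l.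
Proof.
rewrite /ctr_nu big_ord4 /sign4 /inversions4.
by case4 j; case4 k; case4 l; rewrite /= ?mulr0 ?mulr1 ?addr0 ?add0r ?mulrN ?mulr1.
Qed.

Lemma ctr_nu2E x y k l : ctr_nu2 x y k l = ctr_nu2_tab x y k l.
Proof.
by rewrite /ctr_nu2 big_ord4 !ctr_nuE; case4 k; case4 l; rewrite /ctr_nu_tab /ctr_nu2_tab /=; ring.
Qed.

Lemma ctr_nu2_anti x y k l : ctr_nu2 x y k l = - ctr_nu2 x y l k.
Proof. by rewrite !ctr_nu2E; case4 k; case4 l; rewrite /ctr_nu2_tab /=; ring. Qed.

Lemma ctr_nu2_linr x y w p q k l :
  ctr_nu2 x (fun m => p * y m + q * w m) k l = p * ctr_nu2 x y k l + q * ctr_nu2 x w k l.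
Proof. by rewrite !ctr_nu2E; case4 k; case4 l; rewrite /ctr_nu2_tab /=; ring. Qed.

Lemma ctr_nu2_delta x a j c : ctr_nu2 x (fun m => (m == a)%:R) j c = ctr_nu x a j c.
Proof. by rewrite /ctr_nu2 big_ord4; case4 a; rewrite /=; ring. Qed.

Lemma ctr_ctr_nu2 x y l : \sum_k x k * ctr_nu2 x y k l = 0.
Proof. by rewrite big_ord4 !ctr_nu2E; case4 l; rewrite /ctr_nu2_tab /=; ring. Qed.

Lemma ctr_nu2_plucker x y a b i j :
  ctr_nu2 x y a i * ctr_nu2 x y b j - ctr_nu2 x y a j * ctr_nu2 x y b i
  = ctr_nu2 x y a b * ctr_nu2 x y i j.
Proof. by rewrite !ctr_nu2E; case4 a; case4 b; case4 i; case4 j; rewrite /ctr_nu2_tab /=; ring. Qed.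

Lemma ctr_nu2_plucker3 x y a j k l :
  ctr_nu2 x y a j * ctr_nu2 x y k l - ctr_nu2 x y a k * ctr_nu2 x y j l
  + ctr_nu2 x y a l * ctr_nu2 x y j k = 0.
Proof. by rewrite !ctr_nu2E; case4 a; case4 j; case4 k; case4 l; rewrite /ctr_nu2_tab /=; ring. Qed.

Lemma wedge22c_ctr_nu2 x y u i j k l :
  wedge22c (ctr_nu2 x u) (ctr_nu2 x y) i j k l = 0.
Proof.
by rewrite /wedge22c !ctr_nu2E; case4 i; case4 j; case4 k; case4 l; rewrite /ctr_nu2_tab /=; ring.
Qed.

Lemma wedge22c_wedge11 g (al : 'I_4 -> C) be i j k l :
  let T j k l := al j * be k l - al k * be j l + al l * be j k in
  wedge22c (fun c j => g c * al j - g j * al c) be i j k l =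
  g i * T j k l - g j * T i k l + g k * T i j l - g l * T i j k.
Proof. by rewrite /wedge22c /=; ring. Qed.

Lemma wedge22c_factor_ctr_nu2 x y g a i j k l :
  wedge22c (fun c j => g c * ctr_nu2 x y a j - g j * ctr_nu2 x y a c)
           (ctr_nu2 x y) i j k l = 0.
Proof. by rewrite wedge22c_wedge11 /= !ctr_nu2_plucker3 !mulr0 !subrr !addr0 subrr. Qed.

Lemma wedge22c_ctr_nu x y a i j k l :
  wedge22c (fun c d => ctr_nu x a d c) (ctr_nu2 x y) i j k l = 0.
Proof.
have E c d : ctr_nu x a d c = - ctr_nu2 x (fun m => (m == a)%:R) c d.
  by rewrite -ctr_nu2_anti ctr_nu2_delta.
have := wedge22c_ctr_nu2 x y (fun m => (m == a)%:R) i j k l.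
by rewrite /wedge22c !E => H; rewrite -[RHS]oppr0 -H; ring.
Qed.

Lemma wedge22cC al be i j k l : wedge22c al be i j k l = wedge22c be al i j k l.
Proof. by rewrite /wedge22c; ring. Qed.

Lemma eq_wedge22c al al' be be' :
  (forall c d, al c d = al' c d) -> (forall c d, be c d = be' c d) ->
  forall i j k l, wedge22c al be i j k l = wedge22c al' be' i j k l.
Proof. by move=> Eal Ebe i j k l; rewrite /wedge22c !Eal !Ebe. Qed.

Lemma eq_wedge22cl al al' : (forall c d, al c d = al' c d) ->
  forall be i j k l, wedge22c al be i j k l = wedge22c al' be i j k l.
Proof. by move=> Eal be; apply: eq_wedge22c. Qed.

Lemma eq_wedge22cr be be' : (forall c d, be c d = be' c d) ->
  forall al i j k l, wedge22c al be i j k l = wedge22c al be' i j k l.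
Proof. by move=> Ebe al; apply: eq_wedge22c. Qed.

Lemma wedge22cDl al al' be i j k l :
  wedge22c (fun c d => al c d + al' c d) be i j k l
  = wedge22c al be i j k l + wedge22c al' be i j k l.
Proof. by rewrite /wedge22c; ring. Qed.

Lemma wedge22c_linl p q al al' be i j k l :
  wedge22c (fun c d => p * al c d + q * al' c d) be i j k l
  = p * wedge22c al be i j k l + q * wedge22c al' be i j k l.
Proof. by rewrite /wedge22c; ring. Qed.

End PointwiseAlgebra.

Lemma ctr3_nuE (C : numClosedFieldType) (X : vfield C) j k l z :
  ctr3 X (@nu C) j k l z = ctr_nu (X^~ z) j k l.
Proof. by apply: eq_bigr => i _; rewrite nuE. Qed.

Lemma ctr2_ctr3_nuE (C : numClosedFieldType) (X Y : vfield C) k l z :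
  ctr2 Y (ctr3 X (@nu C)) k l z = ctr_nu2 (X^~ z) (Y^~ z) k l.
Proof. by apply: eq_bigr => j _; rewrite ctr3_nuE. Qed.

Lemma wedge22E (C : numClosedFieldType) (al be : form2 C) i j k l z :
  wedge22 al be i j k l z = wedge22c (fun c d => al c d z) (fun c d => be c d z) i j k l.
Proof. by []. Qed.

Section Asymptotics.
Variable C : numClosedFieldType.
Implicit Types (h : pt C) (e d : C) (r u v : pt C -> C).

Definition norm1 h : C := \sum_k `|h k|.

Definition near0 (P : pt C -> Prop) :=
  exists2 d : C, 0 < d & forall h : pt C, (forall k, `|h k| < d) -> P h.

Definition littleo r := forall e, 0 < e -> near0 (fun h => `|r h| <= e * norm1 h).
Definition bigO r := exists2 M, 0 <= M & near0 (fun h => `|r h| <= M * norm1 h).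
Definition cvg0 r := forall e, 0 < e -> near0 (fun h => `|r h| <= e).

Lemma norm1_ge0 h : 0 <= norm1 h. Proof. exact: sumr_ge0. Qed.

Lemma half_gt0 e : 0 < e -> 0 < e / 2%:R.
Proof. by move=> ep; rewrite divr_gt0 // ltr0n. Qed.

Lemma half_lt e : 0 < e -> e / 2%:R < e.
Proof. by move=> ep; rewrite [X in _ < X]splitr ltrDr half_gt0. Qed.

(* [C] is only partially ordered, so there is no [min] to take. *)
Lemma ex_pos_le2 d1 d2 : 0 < d1 -> 0 < d2 -> exists2 d, 0 < d & d <= d1 /\ d <= d2.
Proof.
move=> d1p d2p; have [le12|nle12] := boolP (d1 <= d2); first by exists d1.
exists d2 => //; split => //.
by apply: ltW; rewrite real_ltNge ?gtr0_real.
Qed.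

Lemma le_mul_div_add1 M e : 0 <= M -> 0 < e -> M * e / (M + 1) <= e.
Proof.
move=> M0 ep; have M1 : 0 < M + 1 by rewrite ltr_wpDl.
by rewrite ler_pdivrMr // mulrDr mulr1 mulrC lerDl ltW.
Qed.

Lemma near0_and (P Q : pt C -> Prop) : near0 P -> near0 Q -> near0 (fun h => P h /\ Q h).
Proof.
case=> d1 d1p H1 [d2 d2p H2]; have [d dp [le1 le2]] := ex_pos_le2 d1p d2p.
exists d => // h hd; split; [apply: H1 | apply: H2] => k; exact: lt_le_trans (hd k) _.
Qed.

Lemma near0_mono (P Q : pt C -> Prop) : (forall h, P h -> Q h) -> near0 P -> near0 Q.
Proof. by move=> PQ [d dp H]; exists d => // h /H /PQ. Qed.

Lemma near0_norm1_le c : 0 < c -> near0 (fun h => norm1 h <= c).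
Proof.
move=> cp; exists (c / 4%:R); first by rewrite divr_gt0 // ltr0n.
move=> h hd; rewrite /norm1 big_ord4.
have -> : c = c / 4%:R + c / 4%:R + c / 4%:R + c / 4%:R by field.
by rewrite !lerD // ltW.
Qed.

Lemma littleo_ext r1 r2 : littleo r1 -> (forall h, r1 h = r2 h) -> littleo r2.
Proof. by move=> s E e ep; apply: near0_mono (s e ep) => h; rewrite E. Qed.

Lemma bigO_ext r1 r2 : bigO r1 -> (forall h, r1 h = r2 h) -> bigO r2.
Proof. by move=> [M M0 H] E; exists M => //; apply: near0_mono H => h; rewrite E. Qed.

Lemma littleo0 : littleo (fun _ => 0).
Proof. by move=> e ep; exists 1 => // h _; rewrite normr0 mulr_ge0 ?norm1_ge0 // ltW. Qed.

Lemma littleoD r1 r2 : littleo r1 -> littleo r2 -> littleo (fun h => r1 h + r2 h).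
Proof.
move=> s1 s2 e ep; have e2 := half_gt0 ep.
apply: near0_mono (near0_and (s1 _ e2) (s2 _ e2)) => h [H1 H2].
by apply: le_trans (ler_normD _ _) _; rewrite [e]splitr mulrDl lerD.
Qed.

Lemma littleoZ c r : littleo r -> littleo (fun h => c * r h).
Proof.
move=> s e ep; have cp : 0 < `|c| + 1 by rewrite ltr_wpDl.
apply: near0_mono (s _ (divr_gt0 ep cp)) => h H.
rewrite normrM; apply: le_trans (ler_wpM2l (normr_ge0 c) H) _.
by rewrite mulrA ler_wpM2r ?norm1_ge0 // mulrA le_mul_div_add1.
Qed.

Lemma littleo_bigO r : littleo r -> bigO r.
Proof. by move=> s; exists 1 => //; exact: s _ ltr01. Qed.

Lemma bigOD r1 r2 : bigO r1 -> bigO r2 -> bigO (fun h => r1 h + r2 h).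
Proof.
case=> M1 M1p H1 [M2 M2p H2]; exists (M1 + M2); first exact: addr_ge0.
apply: near0_mono (near0_and H1 H2) => h [a b].
by rewrite mulrDl (le_trans (ler_normD _ _)) // lerD.
Qed.

Lemma bigO_lin (a : 'I_4 -> C) : bigO (fun h => \sum_k a k * h k).
Proof.
exists (\sum_k `|a k|); first exact: sumr_ge0.
exists 1 => // h _; apply: le_trans (ler_norm_sum _ _ _) _.
rewrite /norm1 mulr_sumr; apply: ler_sum => k _; rewrite normrM.
by rewrite ler_wpM2r // (bigD1 k) //= lerDl sumr_ge0.
Qed.

Lemma bigO_cvg0 r : bigO r -> cvg0 r.
Proof.
case=> M M0 H e ep; have M1 : 0 < M + 1 by rewrite ltr_wpDl.
apply: near0_mono (near0_and H (near0_norm1_le (divr_gt0 ep M1))) => h [H1 H2].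
apply: le_trans H1 (le_trans (ler_wpM2l M0 H2) _).
by rewrite mulrA le_mul_div_add1.
Qed.

Lemma littleo_mulr_bounded r v K : littleo r -> 0 <= K -> near0 (fun h => `|v h| <= K) ->
  littleo (fun h => r h * v h).
Proof.
move=> s K0 Hv e ep; have K1 : 0 < K + 1 by rewrite ltr_wpDl.
apply: near0_mono (near0_and (s _ (divr_gt0 ep K1)) Hv) => h [H1 H2].
rewrite normrM; apply: le_trans (ler_pM (normr_ge0 _) (normr_ge0 _) H1 H2) _.
have -> : e / (K + 1) * norm1 h * K = K * e / (K + 1) * norm1 h by ring.
by rewrite ler_wpM2r ?norm1_ge0 ?le_mul_div_add1.
Qed.

Lemma littleoM u v : bigO u -> cvg0 v -> littleo (fun h => u h * v h).
Proof.
case=> M M0 H tv e ep; have M1 : 0 < M + 1 by rewrite ltr_wpDl.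
apply: near0_mono (near0_and H (tv _ (divr_gt0 ep M1))) => h [H1 H2].
rewrite normrM; apply: le_trans (ler_pM (normr_ge0 _) (normr_ge0 _) H1 H2) _.
have -> : M * norm1 h * (e / (M + 1)) = M * e / (M + 1) * norm1 h by ring.
by rewrite ler_wpM2r ?norm1_ge0 ?le_mul_div_add1.
Qed.

Lemma littleo_near r r' : littleo r -> near0 (fun h => r' h = r h) -> littleo r'.
Proof. by move=> s Hn e ep; apply: near0_mono (near0_and (s _ ep) Hn) => h [H ->]. Qed.

End Asymptotics.

Section Differentiability.
Variable C : numClosedFieldType.
Implicit Types (h z : pt C) (f g : fn C) (a b : 'I_4 -> C).

Definition fdiff f z a :=
  littleo (fun h => f (fun m => z m + h m) - f z - \sum_k a k * h k).

Lemma fdiff_ext f g z a : (forall w, f w = g w) -> fdiff f z a -> fdiff g z a.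
Proof. by move=> E s; apply: littleo_ext s _ => h; rewrite !E. Qed.

Lemma eq_fdiff f z a b : (forall k, a k = b k) -> fdiff f z a -> fdiff f z b.
Proof. by move=> E s; apply: (littleo_ext s) => h; rewrite !big_ord4 !E. Qed.

Lemma fdiff_increment f z a : fdiff f z a ->
  bigO (fun h => f (fun m => z m + h m) - f z) /\ cvg0 (fun h => f (fun m => z m + h m) - f z).
Proof.
move=> s; suff B : bigO (fun h => f (fun m => z m + h m) - f z) by split; last exact: bigO_cvg0.
by apply: bigO_ext (bigOD (bigO_lin a) (littleo_bigO s)) _ => h; rewrite addrC subrK.
Qed.

Lemma fdiff_cst c z : fdiff (fun _ => c) z (fun _ => 0).
Proof. by apply: (littleo_ext (@littleo0 C)) => h; rewrite big_ord4; ring. Qed.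

Lemma fdiff_var k z : fdiff (fun w => w k) z (fun m => (k == m)%:R).
Proof. by apply: (littleo_ext (@littleo0 C)) => h; rewrite big_ord4; case4 k => /=; ring. Qed.

Lemma fdiffD f g z a b : fdiff f z a -> fdiff g z b ->
  fdiff (fun w => f w + g w) z (fun k => a k + b k).
Proof.
by move=> sf sg; apply: (littleo_ext (littleoD sf sg)) => h; rewrite !big_ord4; ring.
Qed.

Lemma fdiffM f g z a b : fdiff f z a -> fdiff g z b ->
  fdiff (fun w => f w * g w) z (fun k => a k * g z + f z * b k).
Proof.
move=> sf sg; have [Bf _] := fdiff_increment sf; have [_ Tg] := fdiff_increment sg.
apply: (littleo_ext (littleoD (littleoD (littleoZ (f z) sg) (littleoZ (g z) sf))
                              (littleoM Bf Tg))) => h.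
by rewrite !big_ord4; ring.
Qed.

Lemma fdiff_near_half f z a : fdiff f z a -> f z != 0 ->
  near0 (fun h => `|f z| / 2%:R <= `|f (fun m => z m + h m)|).
Proof.
move=> sf nz; have [_ Tf] := fdiff_increment sf.
have hp : 0 < `|f z| / 2%:R by rewrite half_gt0 // normr_gt0.
apply: near0_mono (Tf _ hp) => h H; set F := f _ in H *.
have : `|f z| <= `|F - f z| + `|F|.
  by rewrite distrC; apply: le_trans (ler_normD _ _); rewrite subrK.
rewrite -lerBlDl; apply: le_trans.
by rewrite -[X in X <= _](addrK (`|f z| / 2%:R)) -splitr lerB.
Qed.

Lemma fdiff_near_neq0 f z a : fdiff f z a -> f z != 0 ->
  near0 (fun h => f (fun m => z m + h m) != 0).
Proof.
move=> sf nz; apply: near0_mono (fdiff_near_half sf nz) => h H.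
have hp : 0 < `|f z| / 2%:R by rewrite half_gt0 // normr_gt0.
by rewrite -normr_gt0 (lt_le_trans hp H).
Qed.

(* The remainder of [1/f] is [-(f z)(remainder of f) + (linear part)(increment)],
   divided by the bounded factor [f(z+h) (f z)^2]. *)
Lemma fdiffV f z a : fdiff f z a -> f z != 0 ->
  fdiff (fun w => (f w)^-1) z (fun k => - a k / (f z) ^+ 2).
Proof.
move=> sf nz; have [_ Tf] := fdiff_increment sf; have Hn := fdiff_near_half sf nz.
have hp : 0 < `|f z| / 2%:R by rewrite half_gt0 // normr_gt0.
set K := ((`|f z| / 2%:R) * `|f z| ^+ 2)^-1.
have K0 : 0 <= K by rewrite invr_ge0 mulr_ge0 // ?exprn_ge0 // ltW.
have num : littleo (fun h => - f z * (f (fun m => z m + h m) - f z - \sum_k a k * h k)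
                 + (\sum_k a k * h k) * (f (fun m => z m + h m) - f z)).
  exact: littleoD (littleoZ _ sf) (littleoM (bigO_lin a) Tf).
apply: (littleo_near (littleo_mulr_bounded
   (v := fun h => (f (fun m => z m + h m) * f z ^+ 2)^-1) num K0 _)).
- apply: near0_mono (Hn) => h H.
  have fz0 : 0 < `|f z| by rewrite normr_gt0.
  rewrite normfV normrM normrX lef_pV2 ?posrE ?mulr_gt0 ?exprn_gt0 ?invr_gt0 ?ltr0n ?(lt_le_trans hp H) //.
  by rewrite ler_wpM2r // ?exprn_ge0.
- apply: near0_mono (Hn) => h H.
  have Fnz : f (fun m => z m + h m) != 0 by rewrite -normr_gt0 (lt_le_trans hp H).
  by rewrite !big_ord4; field; rewrite nz Fnz.
Qed.

Lemma fdiff_div f g z a b : fdiff f z a -> fdiff g z b -> g z != 0 ->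
  fdiff (fun w => f w / g w) z (fun k => (a k * g z - f z * b k) / (g z) ^+ 2).
Proof.
move=> sf sg nz; apply: eq_fdiff (fdiffM sf (fdiffV sg nz)) => k.
by field.
Qed.

Lemma fdiff_has_partial f z a k : fdiff f z a -> has_partial f k z (a k).
Proof.
move=> s e ep; case: (s _ (half_gt0 ep)) => d dp H.
exists d => // h /andP[h0 hd].
pose hv : pt C := fun m => if m == k then h else 0.
have hvd : forall m, `|hv m| < d by move=> m; rewrite /hv; case: eqP; rewrite ?normr0.
have := H hv hvd.
have -> : \sum_m a m * hv m = a k * h by rewrite big_ord4 /hv; case4 k => /=; ring.
have -> : norm1 hv = `|h|.
  by rewrite /norm1 big_ord4 /hv; case4 k => /=; rewrite !normr0 ?add0r ?addr0.
have hnz : h != 0 by rewrite -normr_gt0.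
have -> : (f (shift z k h) - f z) / h - a k = (f (fun m => z m + hv m) - f z - a k * h) / h.
  by rewrite /shift /hv; field.
move=> K; rewrite normrM normfV ltr_pdivrMr //; apply: le_lt_trans K _.
by rewrite ltr_pM2r // half_lt.
Qed.

Lemma has_partial_uniq f k z l1 l2 :
  has_partial f k z l1 -> has_partial f k z l2 -> l1 = l2.
Proof.
move=> H1 H2; apply/eqP; apply/negPn/negP => ne.
have ep : 0 < `|l1 - l2| / 2%:R by rewrite half_gt0 // normr_gt0 subr_eq0.
case: (H1 _ ep) => d1 d1p K1; case: (H2 _ ep) => d2 d2p K2.
have [d dp [le1 le2]] := ex_pos_le2 d1p d2p.
have hp := half_gt0 dp; have hl := half_lt dp.
have hn : `|d / 2%:R| = d / 2%:R by rewrite ger0_norm // ltW.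
set q := (f (shift z k (d / 2%:R)) - f z) / (d / 2%:R).
have A : `|q - l1| < `|l1 - l2| / 2%:R by apply: K1; rewrite hn hp (lt_le_trans hl le1).
have B : `|q - l2| < `|l1 - l2| / 2%:R by apply: K2; rewrite hn hp (lt_le_trans hl le2).
have := ler_distD q l1 l2; rewrite (distrC l1 q) => D.
by have := le_lt_trans D (ltrD A B); rewrite -splitr ltxx.
Qed.

Lemma has_partial_ext f g k z l :
  (forall w, f w = g w) -> has_partial f k z l -> has_partial g k z l.
Proof. by move=> E H e ep; case: (H e ep) => d dp K; exists d => // h hh; rewrite -!E; exact: K. Qed.

Lemma has_partial0 f k z : (forall w, f w = 0) -> has_partial f k z 0.
Proof. by move=> E e ep; exists 1 => // h _; rewrite !E subrr mul0r subr0 normr0. Qed.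

End Differentiability.

Section PolynomialExpressions.
Variable C : numClosedFieldType.

Inductive pexpr := PCst of C | PVar of 'I_4 | PAdd of pexpr & pexpr | PMul of pexpr & pexpr.

Fixpoint peval (p : pexpr) (z : pt C) : C :=
  match p with
  | PCst c => c
  | PVar k => z k
  | PAdd p q => peval p z + peval q z
  | PMul p q => peval p z * peval q z
  end.

Fixpoint pderiv (k : 'I_4) (p : pexpr) : pexpr :=
  match p with
  | PCst _ => PCst 0
  | PVar m => PCst (k == m)%:R
  | PAdd p q => PAdd (pderiv k p) (pderiv k q)
  | PMul p q => PAdd (PMul (pderiv k p) q) (PMul p (pderiv k q))
  end.

Definition PSub p q := PAdd p (PMul (PCst (-1)) q).

Definition psum4 (f : 'I_4 -> pexpr) := PAdd (PAdd (PAdd (f o0) (f o1)) (f o2)) (f o3).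

Definition pquad (A : 'I_4 -> 'I_4 -> C) :=
  psum4 (fun a => psum4 (fun b => PMul (PMul (PCst (A a b)) (PVar a)) (PVar b))).

Definition pwedge22 (P : 'I_4 -> 'I_4 -> pexpr) i j k l : pexpr :=
  PAdd (PAdd (PAdd (PAdd (PAdd (PMul (P i j) (P k l))
    (PMul (PCst (-1)) (PMul (P i k) (P j l)))) (PMul (P i l) (P j k)))
    (PMul (P j k) (P i l))) (PMul (PCst (-1)) (PMul (P j l) (P i k)))) (PMul (P k l) (P i j)).

Lemma peval_psum4 f z : peval (psum4 f) z = \sum_i peval (f i) z.
Proof. by rewrite big_ord4. Qed.

Lemma pderiv_psum4 k f : pderiv k (psum4 f) = psum4 (fun i => pderiv k (f i)).
Proof. by []. Qed.

Lemma peval_pderiv_PVar k m z : peval (pderiv k (PVar m)) z = (k == m)%:R.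
Proof. by []. Qed.

Lemma peval_pderiv_PMul k p q z : peval (pderiv k (PMul p q)) z
  = peval (pderiv k p) z * peval q z + peval p z * peval (pderiv k q) z.
Proof. by []. Qed.

Lemma peval_PSub p q z : peval (PSub p q) z = peval p z - peval q z.
Proof. by rewrite /=; ring. Qed.

Lemma peval_pquad A z : peval (pquad A) z = \sum_a \sum_b A a b * z a * z b.
Proof. by rewrite peval_psum4; apply: eq_bigr => a _; rewrite peval_psum4. Qed.

Lemma pquad_euler A z :
  \sum_k z k * peval (pderiv k (pquad A)) z = 2%:R * peval (pquad A) z.
Proof. by rewrite big_ord4 /pquad /psum4 /=; ring. Qed.

Lemma peval_pwedge22 P i j k l z : peval (pwedge22 P i j k l) z =
  wedge22c (fun c d => peval (P c d) z) (fun c d => peval (P c d) z) i j k l.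
Proof. by rewrite /pwedge22 /wedge22c /=; ring. Qed.

Lemma peval_pderiv_pwedge22 a P i j k l z : peval (pderiv a (pwedge22 P i j k l)) z =
  wedge22c (fun c d => peval (pderiv a (P c d)) z) (fun c d => peval (P c d) z) i j k l
  + wedge22c (fun c d => peval (P c d) z) (fun c d => peval (pderiv a (P c d)) z) i j k l.
Proof. by rewrite /pwedge22 /wedge22c /=; ring. Qed.

Lemma pderivC a b p z :
  peval (pderiv a (pderiv b p)) z = peval (pderiv b (pderiv a p)) z.
Proof. by elim: p => [c|m|p IHp q IHq|p IHp q IHq] //=; rewrite ?IHp ?IHq; ring. Qed.

Lemma eq_peval p w w' : (forall m, w m = w' m) -> peval p w = peval p w'.
Proof. by move=> E; elim: p => [c|m|p IHp q IHq|p IHp q IHq] /=; rewrite ?IHp ?IHq ?E. Qed.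

Lemma fdiff_peval p z : fdiff (peval p) z (fun k => peval (pderiv k p) z).
Proof.
elim: p => [c|m|p IHp q IHq|p IHp q IHq] /=.
- exact: fdiff_cst.
- by apply: eq_fdiff (fdiff_var m z) => k; rewrite eq_sym.
- exact: fdiffD.
- exact: fdiffM.
Qed.

Lemma has_partial_peval p k z : has_partial (peval p) k z (peval (pderiv k p) z).
Proof. exact: fdiff_has_partial (fdiff_peval p z). Qed.

Lemma has_partial_pevalE f p k z l :
  (forall w, f w = peval p w) -> has_partial f k z l -> l = peval (pderiv k p) z.
Proof.
move=> E H; apply: has_partial_uniq H _.
exact: has_partial_ext (fun w => esym (E w)) (has_partial_peval p k z).
Qed.

Lemma peval_pderiv_ext p q k z :
  (forall w, peval p w = peval q w) -> peval (pderiv k p) z = peval (pderiv k q) z.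
Proof. by move=> E; apply: has_partial_pevalE (has_partial_peval p k z). Qed.

Lemma openset_peval_neq0 p : openset (fun w => peval p w != 0).
Proof.
move=> z pz; have [d dp H] := fdiff_near_neq0 (fdiff_peval p z) pz.
exists d => // w Hw; move: (H (fun m => w m - z m) Hw).
by congr (_ != 0); apply: eq_peval => m; rewrite addrC subrK.
Qed.

End PolynomialExpressions.

Arguments PCst {C}. Arguments PVar {C}. Arguments PAdd {C}. Arguments PMul {C}.

Section PolynomialForms.
Variable C : numClosedFieldType.
Implicit Types (p : 'I_4 -> pexpr C) (P : 'I_4 -> 'I_4 -> pexpr C).

Definition pd1 p a b := PSub (pderiv a (p b)) (pderiv b (p a)).

Definition pd2 P a b c :=
  PAdd (PAdd (pderiv a (P b c)) (pderiv b (P c a))) (pderiv c (P a b)).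

Lemma peval_pd2_pd1 p a b c z : peval (pd2 (pd1 p) a b c) z = 0.
Proof.
rewrite /= (pderivC a b (p c)) (pderivC b c (p a)) (pderivC c a (p b)); ring.
Qed.

Lemma peval_pd2D P Q s a b c z :
  peval (pd2 (fun a b => PAdd (P a b) (PMul (PCst s) (Q a b))) a b c) z
  = peval (pd2 P a b c) z + s * peval (pd2 Q a b c) z.
Proof. by rewrite /=; ring. Qed.

Lemma is_d1_peval (om : form1 C) p : (forall l w, om l w = peval (p l) w) ->
  is_d1 om (fun a b z => peval (pd1 p a b) z).
Proof.
move=> E; exists (fun a b z => peval (pderiv a (p b)) z); split=> a b z _.
  exact: has_partial_ext (fun w => esym (E b w)) (has_partial_peval _ a z).
by rewrite peval_PSub.
Qed.

Lemma is_d1_pevalE (om : form1 C) p theta : (forall l w, om l w = peval (p l) w) ->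
  is_d1 om theta -> forall a b z, theta a b z = peval (pd1 p a b) z.
Proof.
move=> E [D [HD Htheta]] a b z.
by rewrite Htheta // peval_PSub !(has_partial_pevalE (E _) (HD _ _ _ _)).
Qed.

Lemma is_d2_peval (eta : form2 C) P : (forall a b w, eta a b w = peval (P a b) w) ->
  is_d2 eta (fun a b c z => peval (pd2 P a b c) z).
Proof.
move=> E; exists (fun a b c z => peval (pderiv a (P b c)) z); split=> // a b c z _.
exact: has_partial_ext (fun w => esym (E b c w)) (has_partial_peval _ a z).
Qed.

Lemma is_d2_pevalE (eta : form2 C) P theta : (forall a b w, eta a b w = peval (P a b) w) ->
  is_d2 eta theta -> forall a b c z, theta a b c z = peval (pd2 P a b c) z.
Proof.
move=> E [D [HD Htheta]] a b c z.
by rewrite Htheta //= !(has_partial_pevalE (E _ _) (HD _ _ _ _ _)).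
Qed.

End PolynomialForms.

Section DecomposableForms.
Variable C : numClosedFieldType.

Lemma wedge22_ctr2_ctr3_nu (eta : form2 C) (X Y : vfield C) :
  (forall a b z, eta a b z = ctr2 Y (ctr3 X (@nu C)) a b z) ->
  forall i j k l z, wedge22 eta eta i j k l z = 0.
Proof.
move=> E i j k l z; have Ez c d : eta c d z = ctr_nu2 (X^~ z) (Y^~ z) c d.
  by rewrite E ctr2_ctr3_nuE.
by rewrite wedge22E (eq_wedge22c Ez Ez) wedge22c_ctr_nu2.
Qed.

Lemma ctr1_ctr2_ctr3_nu (eta : form2 C) (X Y : vfield C) :
  (forall a b z, eta a b z = ctr2 Y (ctr3 X (@nu C)) a b z) ->
  forall j z, ctr1 X eta j z = 0.
Proof.
move=> E j z; rewrite -(ctr_ctr_nu2 (X^~ z) (Y^~ z) j); apply: eq_bigr => k _.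
by rewrite E ctr2_ctr3_nuE.
Qed.

Lemma ex_form2_neq0 (eta : form2 C) p :
  ~ (forall i j, eta i j p = 0) -> exists a b, eta a b p != 0.
Proof.
move=> nz; case: (boolP [exists a, exists b, eta a b p != 0]).
  by case/existsP=> a /existsP[b ab]; exists a, b.
rewrite negb_exists => /forallP all0; case: nz => i j; apply/eqP.
by move: (all0 i); rewrite negb_exists => /forallP /(_ j); rewrite negbK.
Qed.

Lemma alternating2_ctr2_ctr3_nu (eta : form2 C) (X Y : vfield C) :
  (forall a b z, eta a b z = ctr2 Y (ctr3 X (@nu C)) a b z) -> alternating2 eta.
Proof. by move=> E a b z; rewrite !E !ctr2_ctr3_nuE ctr_nu2_anti. Qed.

End DecomposableForms.

Section PolynomialTwoForms.
Variable C : numClosedFieldType.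
Variables (eta : form2 C) (P : 'I_4 -> 'I_4 -> pexpr C) (X : vfield C).
Hypothesis etaP : forall a b z, eta a b z = peval (P a b) z.

Local Notation D c a b z := (peval (pderiv c (P a b)) z).

Lemma fdiff_eta a b z : fdiff (eta a b) z (fun k => D k a b z).
Proof. exact: fdiff_ext (fun w => esym (etaP a b w)) (fdiff_peval _ z). Qed.

Lemma pderiv_anti : alternating2 eta -> forall c a b z, D c a b z = - D c b a z.
Proof.
move=> alt c a b z.
have -> : D c a b z = peval (pderiv c (PMul (PCst (-1)) (P b a))) z.
  by apply: peval_pderiv_ext => w; rewrite /= -!etaP alt; ring.
by rewrite /=; ring.
Qed.

Lemma pderiv_cyclic : is_d2 eta (ctr3 X (@nu C)) ->
  forall a b c z, D a b c z + D b c a z + D c a b z = ctr_nu (X^~ z) a b c.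
Proof. by move=> deta a b c z; rewrite -ctr3_nuE (is_d2_pevalE etaP deta). Qed.

End PolynomialTwoForms.

Section DecomposablePolynomialForms.
Variable C : numClosedFieldType.
Variables (eta : form2 C) (P : 'I_4 -> 'I_4 -> pexpr C) (X Y : vfield C).
Hypothesis etaP : forall a b z, eta a b z = peval (P a b) z.
Hypothesis eta_ctr : forall a b z, eta a b z = ctr2 Y (ctr3 X (@nu C)) a b z.
Hypothesis deta : is_d2 eta (ctr3 X (@nu C)).

Local Notation D c a b z := (peval (pderiv c (P a b)) z).

Lemma eta_ctr_nu2 a b z : eta a b z = ctr_nu2 (X^~ z) (Y^~ z) a b.
Proof. by rewrite eta_ctr ctr2_ctr3_nuE. Qed.

(* Differentiate the identity [eta /\ eta = 0]. *)
Lemma wedge22c_pderiv a z i j k l :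
  wedge22c (fun c d => D a c d z) (fun c d => eta c d z) i j k l = 0.
Proof.
have : peval (pderiv a (pwedge22 P i j k l)) z = 0.
  apply/esym/(has_partial_pevalE (f := fun _ => 0)); last exact: has_partial0.
  move=> w; rewrite peval_pwedge22 -(wedge22c_ctr_nu2 (X^~ w) (Y^~ w) (Y^~ w) i j k l).
  by apply: eq_wedge22c => c d; rewrite -etaP eta_ctr_nu2.
rewrite peval_pderiv_pwedge22 (wedge22cC (fun c d => peval (P c d) z)) -mulr2n.
move/eqP; rewrite mulrn_eq0 /= => /eqP <-.
by apply: eq_wedge22cr => c d; rewrite etaP.
Qed.

Lemma wedge22c_d_ctr a z i j k l :
  wedge22c (fun c d => D c a d z - D d a c z) (fun c d => eta c d z) i j k l = 0.
Proof.
have E c d : D c a d z - D d a c z = ctr_nu (X^~ z) a d c + D a c d z.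
  have anti := pderiv_anti etaP (alternating2_ctr2_ctr3_nu eta_ctr).
  by rewrite (anti d a c) (anti a c d) -(pderiv_cyclic etaP deta a d c); ring.
rewrite (eq_wedge22cl E) wedge22cDl wedge22c_pderiv addr0.
by rewrite (eq_wedge22cr (fun c d => eta_ctr_nu2 c d z)) wedge22c_ctr_nu.
Qed.

Definition d_quotient a b c j z :=
  (D c a j z * eta a b z - eta a j z * D c a b z) / eta a b z ^+ 2.

Lemma wedge22c_d_quotient a b z i j k l : eta a b z != 0 ->
  wedge22c (fun c d => d_quotient a b c d z - d_quotient a b d c z)
           (fun c d => eta c d z) i j k l = 0.
Proof.
move=> nz.
have E c d : d_quotient a b c d z - d_quotient a b d c z =
    (eta a b z)^-1 * (D c a d z - D d a c z)
    + (- (eta a b z)^-2) * (D c a b z * eta a d z - D d a b z * eta a c z).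
  by rewrite /d_quotient; field.
rewrite (eq_wedge22cl E) wedge22c_linl wedge22c_d_ctr mulr0 add0r.
rewrite (eq_wedge22cr (fun c d => eta_ctr_nu2 c d z)).
under eq_wedge22cl do rewrite !eta_ctr_nu2.
by rewrite wedge22c_factor_ctr_nu2 mulr0.
Qed.

Lemma integrable2_decomposable : integrable2 eta.
Proof.
move=> p /ex_form2_neq0 [a [b ab]].
exists (fun w => eta a b w != 0); split=> //.
  move=> z; rewrite etaP => /openset_peval_neq0[r rp H].
  by exists r => // w /H; rewrite etaP.
exists (fun j w => eta a j w / eta a b w), (eta b); split.
- by move=> j z nz; eexists; exact: fdiff_div (fdiff_eta etaP a j z) (fdiff_eta etaP a b z) nz.
- by move=> j z _; eexists; exact: fdiff_eta etaP b j z.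
- move=> i j z nz; rewrite /wedge11 mulrAC [X in _ = _ - X]mulrAC -mulrBl.
  by rewrite !eta_ctr_nu2 ctr_nu2_plucker -!eta_ctr_nu2 mulrAC mulfV ?mul1r.
- move=> om [->|->].
  + exists (fun c j z => d_quotient a b c j z - d_quotient a b j c z); split.
      exists (d_quotient a b); split=> // c j z nz.
      exact: fdiff_has_partial (fdiff_div (fdiff_eta etaP a j z) (fdiff_eta etaP a b z) nz).
    by move=> i j k l z nz; rewrite wedge22E; exact: wedge22c_d_quotient.
  + exists (fun c j z => D c b j z - D j b c z); split.
      exists (fun c j z => D c b j z); split=> // c j z _.
      exact: fdiff_has_partial (fdiff_eta etaP b j z).
    by move=> i j k l z _; rewrite wedge22E; exact: wedge22c_d_ctr.
Qed.

End DecomposablePolynomialForms.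

Lemma homogeneous_deg2_form2_pquad (C : numClosedFieldType) (eta : form2 C) :
  homogeneous_deg2_form2 eta ->
  exists A : 'I_4 -> 'I_4 -> 'I_4 -> 'I_4 -> C,
    forall a b z, eta a b z = peval (pquad (A a b)) z.
Proof.
case=> _ hom.
have /fin_all_exists[A HA] : forall a, exists Aa : 'I_4 -> 'I_4 -> 'I_4 -> C,
    forall b z, eta a b z = peval (pquad (Aa b)) z.
  move=> a; have [Aa HAa] := fin_all_exists (hom a).
  by exists Aa => b z; rewrite HAa peval_pquad.
by exists A.
Qed.

Section HomogeneousForms.
Variable C : numClosedFieldType.
Variables (A : 'I_4 -> 'I_4 -> 'I_4 -> 'I_4 -> C) (eta : form2 C) (X : vfield C).
Hypothesis etaA : forall a b z, eta a b z = peval (pquad (A a b)) z.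

Local Notation D c a b z := (peval (pderiv c (pquad (A a b))) z).

Definition pradial_ctr l := psum4 (fun k => PMul (PVar k) (pquad (A k l))).

Lemma ctr1_radial_peval l w : ctr1 (@radial C) eta l w = peval (pradial_ctr l) w.
Proof. by rewrite peval_psum4; apply: eq_bigr => k _; rewrite /= etaA. Qed.

Lemma peval_pderiv_pradial_ctr a b z :
  peval (pderiv a (pradial_ctr b)) z = eta a b z + \sum_k z k * D a k b z.
Proof.
rewrite pderiv_psum4 peval_psum4.
under eq_bigr do rewrite peval_pderiv_PMul peval_pderiv_PVar -etaA.
rewrite big_split /=; congr (_ + _).
by rewrite big_ord4; case4 a; rewrite /=; ring.
Qed.

Hypothesis eta_alt : alternating2 eta.
Hypothesis deta : is_d2 eta (ctr3 X (@nu C)).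

Lemma peval_pd1_pradial_ctr a b z :
  peval (pd1 pradial_ctr a b) z = 4%:R * eta a b z - ctr_nu2 (X^~ z) z a b.
Proof.
have euler : \sum_k z k * D k a b z = 2%:R * eta a b z by rewrite pquad_euler etaA.
have anti := pderiv_anti etaA eta_alt; have cyclic := pderiv_cyclic etaA deta.
rewrite peval_PSub !peval_pderiv_pradial_ctr (eta_alt b a z).
set S1 := \sum_k _ * D a _ b z; set S2 := \sum_k _ * D b _ a z.
rewrite -[S1](subrK S2) (_ : S1 - S2 = 2%:R * eta a b z - ctr_nu2 (X^~ z) z a b); first ring.
rewrite -euler /S1 /S2 /ctr_nu2 -!sumrB; apply: eq_bigr => k _.
by rewrite (anti a k b) -(cyclic k a b); ring.
Qed.

End HomogeneousForms.

Theorem mainTheorem15 (C : numClosedFieldType) (eta : form2 C) (X Y : vfield C) :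
  homogeneous_deg2_form2 eta ->
  integrable2 eta ->
  is_d2 eta (ctr3 X (@nu C)) ->
  (exists k z, X k z <> 0) ->
  linear_vfield Y ->
  (forall i j z, eta i j z = ctr2 Y (ctr3 X (@nu C)) i j z) ->
  let om := ctr1 (@radial C) eta in
  (exists theta, is_d1 om theta) /\
  forall theta, is_d1 om theta ->
  forall s : C,
    let eta_s : form2 C := fun i j z => eta i j z + s * theta i j z in
    [/\ integrable2 eta_s,
        forall i j k l z, wedge22 eta_s eta_s i j k l z = 0,
        is_d2 eta_s (ctr3 X (@nu C)) &
        forall j z, ctr1 X eta_s j z = 0].
Proof.
move=> hom _ deta _ _ eta_ctr om; have [A etaA] := homogeneous_deg2_form2_pquad hom.
have omA := ctr1_radial_peval etaA.
split=> [|theta dom s eta_s]; first by eexists; exact: is_d1_peval omA.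
have thetaA := is_d1_pevalE omA dom.
pose Ys : vfield C := fun m z => (1 + 4%:R * s) * Y m z + - s * z m.
have etas_ctr a b z : eta_s a b z = ctr2 Ys (ctr3 X (@nu C)) a b z.
  rewrite /eta_s thetaA (peval_pd1_pradial_ctr etaA hom.1 deta) !eta_ctr.
  by rewrite !ctr2_ctr3_nuE ctr_nu2_linr; ring.
pose Ps a b := PAdd (pquad (A a b)) (PMul (PCst s) (pd1 (pradial_ctr A) a b)).
have etasP a b z : eta_s a b z = peval (Ps a b) z by rewrite /eta_s etaA thetaA.
have detas : is_d2 eta_s (ctr3 X (@nu C)).
  case: (is_d2_peval etasP) => D [HD HDs]; exists D; split=> // a b c z _.
  by rewrite -HDs // peval_pd2D peval_pd2_pd1 mulr0 addr0 -(is_d2_pevalE etaA deta).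
split.
- exact: integrable2_decomposable etasP etas_ctr detas.
- exact: wedge22_ctr2_ctr3_nu etas_ctr.
- exact: detas.
- exact: ctr1_ctr2_ctr3_nu etas_ctr.
Qed.
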